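(* Let $w$ be a word over $\{a^{\pm1},t^{\pm1},x^{\pm1}\}$ with $\sigma_x(w)=0$. Then $w=1$ has a solution in $L_2$ if and only if $\sigma_t(w)=0$ and there exists $\delta\in\mathbb{Z}$ such that $\mathrm{den}(w)_\delta$ divides $\mathrm{num}(w)_\delta$ in $\mathbb{Z}_2[z^{\pm1}]$.
   Context: $\mathbb{Z}_2$ is the field with two elements and $\mathbb{Z}_2[z^{\pm1}]$ the ring of Laurent polynomials over it. The lamplighter group $L_2$ is realized as the set $\mathbb{Z}\times\mathbb{Z}_2[z^{\pm1}]$ with multiplication $(\delta_1,f_1)(\delta_2,f_2)=(\delta_1+\delta_2,\ f_1z^{-\delta_2}+f_2)$, generated by $a=(0,1)$ and $t=(1,0)$. A solution of $w=1$ is an element $g\in L_2$ with $w(a,t,g)=1$, where $w(a,t,g)$ is the image of $w$ under the homomorphism $F(a,t,x)\to L_2$, $a\mapsto a$, $t\mapsto t$, $x\mapsto g$. $\sigma_x(w),\sigma_t(w)$ are the exponent sums of $x$ and $t$ in $w$. For Laurent polynomials $g,h$, ''$g$ divides $h$'' means $h=gq$ for some $q\in\mathbb{Z}_2[z^{\pm1}]$ (so $0$ divides only $0$). A $\delta$-parametric polynomial is a finite sum $\sum_{i=s}^{t} f_i(z)z^{i\delta}$ with $f_i\in\mathbb{Z}_2[z^{\pm1}]$ (formally an element of $\mathbb{Z}_2[z^{\pm1},y^{\pm1}]$ with $y$ standing for $z^\delta$); for an integer $\delta$, its instantiation (subscript $\delta$) is the Laurent polynomial obtained by substituting that integer for $\delta$.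 For a word $w$, the $\delta$-parametric polynomials $\mathrm{num}(w),\mathrm{den}(w)$ are defined recursively, reading $w$ from right to left: for the empty word both are $0$; if $w'=\ell w$ is obtained by prepending a letter $\ell$ to $w$, and $x_w=\sigma_x(w)$, $t_w=\sigma_t(w)$, then: if $\ell=x$, $\mathrm{den}(w')=\mathrm{den}(w)+z^{-t_w-x_w\delta}$ and $\mathrm{num}(w')=\mathrm{num}(w)$; if $\ell=x^{-1}$, $\mathrm{den}(w')=\mathrm{den}(w)+z^{-t_w-(x_w-1)\delta}$ and $\mathrm{num}(w')=\mathrm{num}(w)$; if $\ell=a^{\pm1}$, $\mathrm{num}(w')=\mathrm{num}(w)+z^{-t_w-x_w\delta}$ and $\mathrm{den}(w')=\mathrm{den}(w)$; if $\ell=t^{\pm1}$, both are unchanged. *)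

From mathcomp Require Import all_boot all_order all_algebra.
Set Implicit Arguments. Unset Strict Implicit. Unset Printing Implicit Defensive.
Import Order.TTheory GRing.Theory Num.Theory.
Local Open Scope ring_scope.

(* Laurent polynomials over Z_2: coefficient functions int -> 'F_2
   (coefficient of z^n), required to be finitely supported where relevant. *)
Definition laurent := int -> 'F_2.

Definition finsupp (f : laurent) : Prop :=
  exists N : nat, forall n : int, (N < `|n|)%N -> f n = 0.

Definition lzero : laurent := fun _ => 0.

(* g divides h: h = g * q for some Laurent polynomial q; the product is
   the convolution, computed over a window [-N, N] containing both supports. *)
Definition ldvd (g h : laurent) : Prop :=
  exists (q : laurent) (N : nat),
    (forall n : int, (N < `|n|)%N -> g n = 0) /\
    (forall n : int, (N < `|n|)%N -> q n = 0) /\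
    (forall n : int,
        h n = \sum_(0 <= k < (N + N).+1)
                 g (k%:Z - N%:Z) * q (n - (k%:Z - N%:Z))).

(* Lamplighter group L_2 = Z x Z_2[z^{+-1}], (d1,f1)(d2,f2) = (d1+d2, f1 z^{-d2} + f2). *)
Definition L2 := (int * laurent)%type.

Definition L2mul (g h : L2) : L2 :=
  (g.1 + h.1, fun n => g.2 (n + h.1) + h.2 n).
Definition L2inv (g : L2) : L2 := (- g.1, fun n => g.2 (n - g.1)).
Definition L2one : L2 := (0, lzero).
Definition L2a : L2 := (0, fun n => (n == 0)%:R).
Definition L2t : L2 := (1, lzero).

Inductive letter := LA | LAinv | LT | LTinv | LX | LXinv.
Definition word := seq letter.

Definition letter_img (g : L2) (l : letter) : L2 :=
  match l with
  | LA => L2a | LAinv => L2inv L2a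
  | LT => L2t | LTinv => L2inv L2t
  | LX => g | LXinv => L2inv g
  end.

Definition eval_word (w : word) (g : L2) : L2 :=
  foldr (fun l acc => L2mul (letter_img g l) acc) L2one w.

Definition sigma_x (w : word) : int :=
  foldr (fun l s => match l with LX => s + 1 | LXinv => s - 1 | _ => s end) 0 w.
Definition sigma_t (w : word) : int :=
  foldr (fun l s => match l with LT => s + 1 | LTinv => s - 1 | _ => s end) 0 w.

(* delta-parametric polynomials: formal sums of monomials z^e y^c (y = z^delta),
   stored as the list of pairs (e, c); repeated monomials add mod 2. *)
Definition dpoly := seq (int * int).

Definition inst (delta : int) (P : dpoly) : laurent :=
  fun n => \sum_(m <- P) ((m.1 + m.2 * delta == n)%:R : 'F_2).

Fixpoint num (w : word) : dpoly :=
  match w with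
  | [::] => [::]
  | l :: w' =>
      match l with
      | LA | LAinv => (- sigma_t w', - sigma_x w') :: num w'
      | _ => num w'
      end
  end.

Fixpoint den (w : word) : dpoly :=
  match w with
  | [::] => [::]
  | l :: w' =>
      match l with
      | LX => (- sigma_t w', - sigma_x w') :: den w'
      | LXinv => (- sigma_t w', - (sigma_x w' - 1)) :: den w'
      | _ => den w'
      end
  end.

From mathcomp Require Import all_boot all_order all_algebra zify.
From Stdlib Require Import FunctionalExtensionality.
Import GRing.Theory Num.Theory.

Set Implicit Arguments.
Unset Strict Implicit.
Local Open Scope ring_scope.

(* Substituting x := (δ, f) gives w(a, t, g) = (σ_t(w) + σ_x(w) δ, num(w)_δ + den(w)_δ f):
   each letter x^{±1} contributes a shifted copy of f, each a^{±1} a monomial.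
   When σ_x(w) = 0 this is the identity iff σ_t(w) = 0 and, the characteristic
   being 2, num(w)_δ = den(w)_δ f, i.e. den(w)_δ divides num(w)_δ with quotient f. *)

Definition dmon_exp (d : int) (m : int * int) : int := m.1 + m.2 * d.

Definition inst_mul (d : int) (P : dpoly) (f : laurent) : laurent :=
  fun n => \sum_(m <- P) f (n - dmon_exp d m).

Lemma eval_word_fst w d f : (eval_word w (d, f)).1 = sigma_t w + sigma_x w * d.
Proof.
elim: w => [|l w IH] /=; first by rewrite mul0r addr0.
by rewrite IH; case: l => /=; rewrite ?mulrDl; lia.
Qed.

Lemma eval_word_snd w d f :
  (eval_word w (d, f)).2 =1 inst d (num w) \+ inst_mul d (den w) f.
Proof.
elim: w => [|l w IH] n /=; first by rewrite /inst /inst_mul !big_nil addr0.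
rewrite IH eval_word_fst.
case: l; rewrite /= /inst /inst_mul /= ?big_cons /dmon_exp /= ?add0r //.
- by rewrite addrA; congr (_%:R + _ + _); apply/eqP/eqP; lia.
- by rewrite addrA; congr (_%:R + _ + _); apply/eqP/eqP; lia.
- by rewrite addrCA; congr (_ + (f _ + _)); lia.
- by rewrite addrCA; congr (_ + (f _ + _)); lia.
Qed.

Lemma eval_word_eq1 w d f : sigma_x w = 0 ->
  eval_word w (d, f) = L2one <->
  sigma_t w = 0 /\ inst d (num w) =1 inst_mul d (den w) f.
Proof.
move=> Hx; rewrite [eval_word w _]surjective_pairing eval_word_fst Hx mul0r addr0.
have char2 : (2%N \in [pchar 'F_2]) by exact: pchar_Fp.
split=> [[-> E2] | [-> E2]].
- split=> // n; move/(congr1 (fun h : laurent => h n)): E2; rewrite eval_word_snd.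
  by move/eqP; rewrite /lzero addr_eq0 (oppr_pchar2 char2) => /eqP.
- congr (_, _); apply: functional_extensionality => n.
  by rewrite eval_word_snd /= E2 addrr_pchar2.
Qed.

Section Windows.

Variable R : pzSemiRingType.

Lemma sum_window_indicator (F : int -> R) (e : int) (N M : nat) :
  \sum_(0 <= k < M) (e == k%:Z - N%:Z)%:R * F (k%:Z - N%:Z) =
  if (0 <= e + N%:Z) && (e + N%:Z < M%:Z) then F e else 0.
Proof.
elim: M => [|M IH]; first by rewrite big_geq //; case: ifP => //; lia.
rewrite big_nat_recr //= IH.
have [->|neq] := eqVneq e (M%:Z - N%:Z).
  rewrite mul1r.
  have -> : (0 <= M%:Z - N%:Z + N%:Z) && (M%:Z - N%:Z + N%:Z < M%:Z) = false by lia.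
  have -> : (0 <= M%:Z - N%:Z + N%:Z) && (M%:Z - N%:Z + N%:Z < M.+1%:Z) by lia.
  by rewrite add0r.
rewrite mul0r addr0; congr (if _ then _ else _).
by apply/idP/idP; lia.
Qed.

Lemma sum_window_widen (G : int -> R) (N i : nat) :
  (forall j : int, (N < `|j|)%N -> G j = 0) ->
  \sum_(0 <= k < (N + N).+1) G (k%:Z - N%:Z) =
  \sum_(0 <= k < ((N + i) + (N + i)).+1) G (k%:Z - (N + i)%:Z).
Proof.
move=> G0.
rewrite [RHS](@big_cat_nat _ _ _ i) //=; last by lia.
rewrite [X in _ = _ + X](@big_cat_nat _ _ _ (i + (N + N).+1)) //=; try lia.
rewrite [X in _ = X + _]big_nat [X in _ = X + _]big1 ?add0r;
  last by move=> k /andP [_ ?]; apply: G0; lia.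
rewrite [X in _ = _ + X]big_nat [X in _ = _ + X]big1 ?addr0;
  last by move=> k /andP [? ?]; apply: G0; lia.
rewrite (big_addn 0 _ i).
have -> : (i + (N + N).+1 - i = (N + N).+1)%N by lia.
by apply: eq_bigr => k _; congr G; lia.
Qed.

End Windows.

Lemma dmon_exp_bounded d (P : dpoly) :
  exists B : nat, forall m, m \in P -> (`|dmon_exp d m| <= B)%N.
Proof.
elim: P => [|m P [B HB]]; first by exists 0%N.
by exists (maxn `|dmon_exp d m| B) => m'; rewrite inE => /orP [/eqP ->|/HB]; lia.
Qed.

Section Instantiation.

Variables (d : int) (P : dpoly) (B : nat).
Hypothesis P_bounded : forall m, m \in P -> (`|dmon_exp d m| <= B)%N.

Lemma inst_out_of_bound n : (B < `|n|)%N -> inst d P n = 0.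
Proof.
move=> Hn; rewrite /inst big_seq big1 // => m /P_bounded Hm.
have -> : (m.1 + m.2 * d == n) = false.
  by apply/negbTE/eqP => E; move: Hm; rewrite /dmon_exp E; lia.
by [].
Qed.

Lemma window_conv_inst (N : nat) f n : (B <= N)%N ->
  \sum_(0 <= k < (N + N).+1) inst d P (k%:Z - N%:Z) * f (n - (k%:Z - N%:Z)) =
  inst_mul d P f n.
Proof.
move=> BN; rewrite /inst /inst_mul.
under eq_bigr do rewrite big_distrl /=.
rewrite exchange_big /= big_seq [RHS]big_seq; apply: eq_bigr => m /P_bounded Hm.
rewrite (sum_window_indicator (fun j => f (n - j))).
by have -> : (0 <= dmon_exp d m + N%:Z) && (dmon_exp d m + N%:Z < (N + N).+1%:Z) by lia.
Qed.

End Instantiation.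

Lemma ldvd_instP d (P : dpoly) (h : laurent) :
  ldvd (inst d P) h <-> exists2 q : laurent, finsupp q & h =1 inst_mul d P q.
Proof.
have [B HB] := dmon_exp_bounded d P.
split=> [[q [N [P0 [q0 Eh]]]] | [q [N q0] Eh]].
- exists q; first by exists N.
  move=> n; rewrite Eh (@sum_window_widen _ (fun j => inst d P j * q (n - j)) N B).
    by rewrite (window_conv_inst HB) //; lia.
  by move=> j /P0 ->; rewrite mul0r.
- exists q, (maxn N B); split; [|split].
  + by move=> n Hn; apply: (inst_out_of_bound HB); lia.
  + by move=> n Hn; apply: q0; lia.
  + by move=> n; rewrite Eh (window_conv_inst HB) //; lia.
Qed.

Theorem mainTheorem7 (w : word) :
  sigma_x w = 0 ->
  ((exists g : L2, finsupp g.2 /\ eval_word w g = L2one) <->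
   (sigma_t w = 0 /\ exists delta : int, ldvd (inst delta (den w)) (inst delta (num w)))).
Proof.
move=> Hx; split.
- move=> [[d f] [/= f_fin /(eval_word_eq1 d f Hx) [Ht Ediv]]].
  by split=> //; exists d; apply/ldvd_instP; exists f.
- move=> [Ht [d /ldvd_instP [f f_fin Ediv]]].
  by exists (d, f); split=> //; apply/(eval_word_eq1 d f Hx).
Qed.
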